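(* Let $f$ be a homeomorphism of a compact, connected, separable metric space $\mathcal M$, and assume that $\mathcal M$ is not a chain-transitive set for $f$. If a CRH-attractor $A$ of $f$ and a CRH-repeller $R$ of $f$ have non-empty intersection, then $A=R$, and this set is a reversible core of $f$.
   Context: An $\varepsilon$-orbit of $f$ is a finite sequence $x_1,\dots,x_N$ with $\mathrm{dist}(f(x_j),x_{j+1})<\varepsilon$ for $j=1,\dots,N-1$; it connects $x_1$ to $x_N$. A closed invariant set $\Lambda$ is chain-transitive if for every $\varepsilon>0$ and all $x,y\in\Lambda$ there is an $\varepsilon$-orbit lying in $\Lambda$ connecting $x$ to $y$. A closed invariant set $A$ is stable if for every $\delta>0$ there is $\varepsilon>0$ such that no $\varepsilon$-orbit starting in $A$ leaves the $\delta$-neighbourhood of $A$. A CRH-attractor of $f$ is a closed invariant set that is chain-transitive and stable; a CRH-repeller of $f$ is a CRH-attractor of $f^{-1}$. A CRH-attractor $A$ is a dissipative attractor if there exists a point $x\notin A$ such that for every $\varepsilon>0$ some $\varepsilon$-orbit connects $x$ to a point of $A$; otherwise $A$ is called a reversible core. *)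

From HB Require Import structures.
From mathcomp Require Import all_boot all_order all_algebra.
From mathcomp Require Import all_classical all_reals all_analysis.
Set Implicit Arguments. Unset Strict Implicit. Unset Printing Implicit Defensive.
Import Order.TTheory GRing.Theory Num.Theory.
Local Open Scope classical_set_scope.
Local Open Scope ring_scope.

(* The metric space is a pseudoMetricType M whose balls are the metric balls
   of an explicit metric d (see the hypotheses of theorem2). *)

Section Chains.
Context {R : realType} {M : Type}.
Variables (d : M -> M -> R) (f : M -> M).

Definition eps_orbit (eps : R) (n : nat) (x : nat -> M) : Prop :=
  forall j, (j < n)%N -> d (f (x j)) (x j.+1) < eps.

Definition invariant (L : set M) : Prop := f @` L = L.

Definition chain_transitive (L : set M) : Prop :=
  forall eps : R, 0 < eps -> forall a b, L a -> L b ->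
    exists n (x : nat -> M), [/\ x 0%N = a, x n = b, eps_orbit eps n x &
      forall j, (j <= n)%N -> L (x j)].

Definition chain_stable (A : set M) : Prop :=
  forall delta : R, 0 < delta -> exists2 eps : R, 0 < eps &
    forall n (x : nat -> M), A (x 0%N) -> eps_orbit eps n x ->
      forall j, (j <= n)%N -> exists2 a, A a & d (x j) a < delta.

End Chains.

Definition CRH_attractor {R : realType} {M : topologicalType}
  (d : M -> M -> R) (f : M -> M) (A : set M) : Prop :=
  [/\ closed A, invariant f A, chain_transitive d f A & chain_stable d f A].

(* g is the inverse homeomorphism f^{-1} *)
Definition CRH_repeller {R : realType} {M : topologicalType}
  (d : M -> M -> R) (g : M -> M) (A : set M) : Prop := CRH_attractor d g A.

Definition dissipative_attractor {R : realType} {M : topologicalType}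
  (d : M -> M -> R) (f : M -> M) (A : set M) : Prop :=
  CRH_attractor d f A /\
  exists2 x, ~ A x & forall eps : R, 0 < eps ->
    exists n (y : nat -> M), [/\ y 0%N = x, A (y n) & eps_orbit d f eps n y].

Definition reversible_core {R : realType} {M : topologicalType}
  (d : M -> M -> R) (f : M -> M) (A : set M) : Prop :=
  CRH_attractor d f A /\
  ~ (exists2 x, ~ A x & forall eps : R, 0 < eps ->
    exists n (y : nat -> M), [/\ y 0%N = x, A (y n) & eps_orbit d f eps n y]).

From HB Require Import structures.
From mathcomp Require Import all_boot all_order all_algebra.
From mathcomp Require Import all_classical all_reals all_analysis.
From mathcomp Require Import lra zify.
Set Implicit Arguments. Unset Strict Implicit. Unset Printing Implicit Defensive.
Import Order.TTheory GRing.Theory Num.Theory.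
Local Open Scope classical_set_scope.
Local Open Scope ring_scope.

(* Reversing an eps-orbit of f ending in a closed set L gives, by uniform
   continuity of g = f^-1 on the compact space, an eps'-orbit of g that starts
   in L and ends at its initial point a.  If L is chain-stable for g, this
   orbit stays close to L, so a is arbitrarily close to L, i.e. a \in L.
   Chain-transitivity of A supplies such orbits from any a \in A to a point of
   A `&` Rp, whence A `<=` Rp; symmetrically Rp `<=` A; and a point chained
   into A = Rp lies in Rp = A, so A is a reversible core. *)

Section ChainReach.
Context {R : realType} {M : pseudoMetricType R}.
Variable d : M -> M -> R.
Hypothesis d_sym : forall x y, d x y = d y x.
Hypothesis d_tri : forall x y z, d x z <= d x y + d y z.
Hypothesis d_ball : forall (x : M) (e : R) (y : M), ball x e y <-> d x y < e.

Definition d_unif_continuous (g : M -> M) : Prop :=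
  forall e, 0 < e -> exists2 r, 0 < r & forall u v, d u v < r -> d (g u) (g v) < e.

Lemma compact_d_unif_continuous (g : M -> M) :
  compact [set: M] -> continuous g -> d_unif_continuous g.
Proof.
move=> cpt gc e e0.
have [x _|r /= r0 HV] := proj1 (compact_near_coveringP _) cpt R (0^'+)
  (fun r x => forall y, d x y < r -> d (g x) (g y) < e).
- have e20 : 0 < e / 2 by rewrite divr_gt0.
  have /nbhs_ballP [r r0 Hr] := gc x (ball (g x) (e / 2)) (nbhsx_ballx _ _ e20).
  have r20 : 0 < r / 2 by rewrite divr_gt0.
  near=> x' δ => y /= dy.
  have dxx' : d x x' < r / 2.
    by near: x'; apply/nbhs_ballP; exists (r / 2) => // z /d_ball.
  have δr : δ < r / 2 by near: δ; exact: nbhs_right_lt.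
  have gxx' : d (g x') (g x) < e / 2 by rewrite d_sym; apply/d_ball/Hr/d_ball; lra.
  have gxy : d (g x) (g y) < e / 2.
    by apply/d_ball/Hr/d_ball; have := d_tri x x' y; lra.
  by have := d_tri (g x') (g x) (g y); lra.
- have r20 : 0 < r / 2 by rewrite divr_gt0.
  exists (r / 2) => // u v; apply: (HV (r / 2)) => //.
  by rewrite /ball_ /= sub0r normrN gtr0_norm //; lra.
Unshelve. all: end_near. Qed.

Definition chain_reaches (f : M -> M) (a : M) (L : set M) : Prop :=
  forall eps, 0 < eps -> exists n (x : nat -> M),
    [/\ x 0%N = a, L (x n) & eps_orbit d f eps n x].

Lemma eps_orbit_rev (f g : M -> M) (fK : cancel f g) (e r : R) n (x : nat -> M) :
  (forall u v, d u v < r -> d (g u) (g v) < e) ->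
  eps_orbit d f r n x -> eps_orbit d g e n (fun j => x (n - j)%N).
Proof.
move=> gr ox j jn /=; rewrite d_sym.
have -> : (n - j = (n - j.+1).+1)%N by lia.
by rewrite -{1}(fK (x (n - j.+1)%N)); apply/gr/ox; lia.
Qed.

Lemma chain_reaches_stable_mem (f g : M -> M) (fK : cancel f g) (L : set M) a :
  d_unif_continuous g -> closed L -> chain_stable d g L ->
  chain_reaches f a L -> L a.
Proof.
move=> ucg Lc Ls ha; apply: Lc => B /nbhs_ballP [δ /= δ0 HB].
have [eps eps0 Hs] := Ls δ δ0.
have [r r0 gr] := ucg eps eps0.
have [n [x [x0 xn ox]]] := ha r r0.
have Lstart : L (x (n - 0)%N) by rewrite subn0.
have [b Lb] := Hs n _ Lstart (eps_orbit_rev fK gr ox) n (leqnn n).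
rewrite /= subnn x0 => dab.
by exists b; split => //; exact/HB/d_ball.
Qed.

Lemma chain_transitive_reaches (f : M -> M) (A L : set M) a p :
  chain_transitive d f A -> A a -> A p -> L p -> chain_reaches f a L.
Proof.
move=> Act Aa Ap Lp eps eps0.
have [n [x [x0 xn ox _]]] := Act eps eps0 a p Aa Ap.
by exists n, x; split => //; rewrite xn.
Qed.

End ChainReach.

Theorem theorem2 (R : realType) (M : pseudoMetricType R) (d : M -> M -> R)
  (d_ge0 : forall x y, 0 <= d x y)
  (d_eq0 : forall x y, d x y = 0 -> x = y)
  (d_sym : forall x y, d x y = d y x)
  (d_tri : forall x y z, d x z <= d x y + d y z)
  (d_ball : forall (x : M) (e : R) (y : M), ball x e y <-> d x y < e)
  (cpt : compact [set: M]) (conn : connected [set: M])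
  (sep : exists S : set M, countable S /\ closure S = [set: M])
  (f g : M -> M) (fK : cancel f g) (gK : cancel g f)
  (fc : continuous f) (gc : continuous g)
  (notCT : ~ chain_transitive d f [set: M])
  (A Rp : set M) (hA : CRH_attractor d f A) (hR : CRH_repeller d g Rp)
  (hAR : A `&` Rp !=set0) :
  A = Rp /\ reversible_core d f A.
Proof.
have [Ac _ Act Ast] := hA.
have [Rc _ Rct Rst] := hR.
have ucf := compact_d_unif_continuous d_sym d_tri d_ball cpt fc.
have ucg := compact_d_unif_continuous d_sym d_tri d_ball cpt gc.
have [p [Ap Rpp]] := hAR.
have AR : A = Rp.
  apply/seteqP; split => a Ha.
  - exact: (chain_reaches_stable_mem d_sym d_ball fK ucg Rc Rst
              (chain_transitive_reaches Act Ha Ap Rpp)).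
  - exact: (chain_reaches_stable_mem d_sym d_ball gK ucf Ac Ast
              (chain_transitive_reaches Rct Ha Rpp Ap)).
split => //; split => // -[x nAx xA]; apply: nAx.
rewrite AR in xA *.
exact: (chain_reaches_stable_mem d_sym d_ball fK ucg Rc Rst xA).
Qed.
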